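(* Let $G$ be a $P_5$-free graph and let $D=\{d_1,\dots,d_m\}\subseteq V(G)$. Define $X_1 := N(d_1)\setminus D$ and, for $i\in\{2,\dots,m\}$, $X_i := N(d_i)\setminus (X_1\cup\dots\cup X_{i-1}\cup D)$. Let $1\le i<j\le m$, let $I\subseteq X_i$ be an independent set in $G$, and let $P := N(I)\cap X_j$. Then there exists $I'\subseteq I$ with $|I'|\le 2$ such that every vertex of $P$ has a neighbor in $I'$.
   Context: $N(v)$ denotes the open neighborhood of $v$ in $G$ and $N(I)=\bigcup_{v\in I}N(v)$. A graph is $P_5$-free if it has no induced path on 5 vertices. *)

(* Simple graphs on a finType T given by a symmetric irreflexive relation. *)
From mathcomp Require Import all_boot.
Set Implicit Arguments. Unset Strict Implicit. Unset Printing Implicit Defensive.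

Section Graphs.
Variable T : finType.
Variable e : rel T.

Definition nbhd (v : T) : {set T} := [set u | e v u].
Definition nbhdS (I : {set T}) : {set T} := \bigcup_(v in I) nbhd v.

Definition independent (I : {set T}) : Prop :=
  forall u v, u \in I -> v \in I -> ~~ e u v.

Definition induced_P5 (f : 'I_5 -> T) : Prop :=
  injective f /\
  forall a b : 'I_5, e (f a) (f b) = ((a.+1 == b :> nat) || (b.+1 == a :> nat)).

Definition P5_free : Prop := forall f : 'I_5 -> T, ~ induced_P5 f.

(* D = {d_0, ..., d_{m-1}} (0-based indexing) *)
Variables (m : nat) (d : nat -> T).

Definition Dset : {set T} := [set d (val k) | k : 'I_m].

(* Xupto n = X_0 ∪ ... ∪ X_{n-1} *)
Fixpoint Xupto (n : nat) : {set T} :=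
  match n with
  | 0 => set0
  | k.+1 => Xupto k :|: (nbhd (d k) :\: (Xupto k :|: Dset))
  end.

Definition Xset (i : nat) : {set T} := nbhd (d i) :\: (Xupto i :|: Dset).

End Graphs.

From mathcomp Require Import all_boot.

(* The vertex d_i is complete to I and anticomplete to P.  If two vertices p, q
   of P both miss some c in I while each sees a vertex of I missed by the other,
   then c - d_i - b - p - q or p - b - d_i - b' - q is an induced P5.  Hence the
   traces N(p) ∩ I of the vertices of P missing a fixed a ∈ N(p0) ∩ I form a
   chain, and any b in the smallest of them dominates all of them, so {a, b}
   dominates P. *)

Set Implicit Arguments.
Unset Strict Implicit.
Unset Printing Implicit Defensive.

Definition adj5 (a b : 'I_5) : bool := (a.+1 == b :> nat) || (b.+1 == a :> nat).

Lemma adj5_inj (a b : 'I_5) : (forall c, adj5 a c = adj5 b c) -> a = b.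
Proof.
move=> H; apply: val_inj.
case: a b H => [[|[|[|[|[|a]]]]] Ha] [[|[|[|[|[|b]]]]] Hb] //= H;
 first [ by move: (H (@Ordinal 5 0 isT))
       | by move: (H (@Ordinal 5 1 isT))
       | by move: (H (@Ordinal 5 2 isT))
       | by move: (H (@Ordinal 5 3 isT))
       | by move: (H (@Ordinal 5 4 isT)) ].
Qed.

Section Graph.
Variables (T : finType) (e : rel T).
Hypotheses (e_sym : symmetric e) (e_irr : irreflexive e).

Lemma mem_nbhd v u : (u \in nbhd e v) = e v u.
Proof. by rewrite inE. Qed.

Lemma mem_nbhdS (I : {set T}) u :
  reflect (exists2 a, a \in I & e u a) (u \in nbhdS e I).
Proof.
apply: (iffP bigcupP) => -[a aI]; rewrite ?mem_nbhd => ua; exists a => //.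
  by rewrite e_sym.
by rewrite mem_nbhd e_sym.
Qed.

Lemma P5_free_path (v0 v1 v2 v3 v4 : T) :
  P5_free e ->
  e v0 v1 -> e v1 v2 -> e v2 v3 -> e v3 v4 ->
  ~~ e v0 v2 -> ~~ e v0 v3 -> ~~ e v0 v4 -> ~~ e v1 v3 -> ~~ e v1 v4 ->
  ~~ e v2 v4 -> False.
Proof.
move=> hP5 h01 h12 h23 h34 n02 n03 n04 n13 n14 n24.
pose f (k : 'I_5) := nth v0 [:: v0; v1; v2; v3; v4] k.
have e_f : forall a b : 'I_5, e (f a) (f b) = adj5 a b.
  move=> [[|[|[|[|[|a]]]]] Ha] [[|[|[|[|[|b]]]]] Hb] //=;
  rewrite /f /adj5 /= ?e_irr; rewrite 1?[e v1 v0]e_sym 1?[e v2 v1]e_sym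
    1?[e v3 v2]e_sym 1?[e v4 v3]e_sym 1?[e v2 v0]e_sym 1?[e v3 v0]e_sym
    1?[e v4 v0]e_sym 1?[e v3 v1]e_sym 1?[e v4 v1]e_sym 1?[e v4 v2]e_sym
    ?h01 ?h12 ?h23 ?h34 ?(negbTE n02) ?(negbTE n03) ?(negbTE n04)
    ?(negbTE n13) ?(negbTE n14) ?(negbTE n24) //.
apply: (hP5 f); split=> [a b fab|//]; apply: adj5_inj => c.
by rewrite -!e_f fab.
Qed.

Section Traces.
Hypothesis hP5 : P5_free e.
Variables (z : T) (I P : {set T}).
Hypotheses (I_ind : independent e I) (z_I : {in I, forall a, e z a})
  (z_P : {in P, forall q, ~~ e z q}).

Definition trace (q : T) : {set T} := I :&: nbhd e q.

Lemma mem_trace q a : (a \in trace q) = (a \in I) && e q a.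
Proof. by rewrite !inE. Qed.

Lemma trace_nested p q c : p \in P -> q \in P -> c \in I ->
  ~~ e p c -> ~~ e q c -> (trace p \subset trace q) || (trace q \subset trace p).
Proof.
move=> pP qP cI pc qc.
apply/negPn/norP => -[/subsetPn [b] bp bq] /subsetPn [b' b'q b'p].
move: bp bq b'q b'p; rewrite !mem_trace => /andP [bI pb].
rewrite bI /= => qb /andP [b'I qb']; rewrite b'I /= => pb'.
have zp := z_P pP; have zq := z_P qP.
have [pq | pq] := boolP (e p q).
- by apply: (P5_free_path hP5 _ (z_I bI) _ pq (I_ind cI bI) _ _ zp zq);
    rewrite e_sym // z_I.
- by apply: (P5_free_path hP5 pb _ (z_I b'I) _ _ pb' pq (I_ind bI b'I) _ zq);
    rewrite e_sym // z_I.
Qed.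

Lemma trace_sub_of_card p q c : p \in P -> q \in P -> c \in I ->
  ~~ e p c -> ~~ e q c -> #|trace p| <= #|trace q| -> trace p \subset trace q.
Proof.
move=> pP qP cI pc qc card_le.
have [//| sub_qp] := orP (trace_nested pP qP cI pc qc).
by have /eqP -> : trace q == trace p by rewrite eqEcard sub_qp.
Qed.

Lemma dominating_pair : P \subset nbhdS e I ->
  exists2 I' : {set T}, (I' \subset I) && (#|I'| <= 2) &
    forall p, p \in P -> exists2 a, a \in I' & e p a.
Proof.
move=> /subsetP P_N.
have [-> | [p0 p0P]] := set_0Vmem P.
  by exists set0; rewrite ?sub0set ?cards0 // => p; rewrite inE.
have [a aI _] := mem_nbhdS I p0 (P_N p0 p0P).
pose P' := [set q in P | ~~ e q a].
have [P'0 | [q1 q1P']] := set_0Vmem P'.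
  exists [set a]; first by rewrite sub1set aI cards1.
  move=> p pP; exists a; rewrite ?inE //; apply/negPn/negP => pa.
  have : p \in P' by rewrite inE pP pa.
  by rewrite P'0 inE.
have [q0 q0P' q0_min] := arg_minnP (fun q => #|trace q|) q1P'.
have [b bI q0b] : exists2 b, b \in I & e q0 b.
  by apply/mem_nbhdS/P_N; case/setIdP: q0P'.
exists [set a; b].
  by rewrite subUset !sub1set aI bI cards2; case: (a != b).
move=> p pP; have [pa | pa] := boolP (e p a).
  by exists a; rewrite ?inE ?eqxx.
exists b; first by rewrite !inE eqxx orbT.
have pP' : p \in P' by rewrite inE pP pa.
case/setIdP: q0P' => q0P q0a.
have /subsetP sub := trace_sub_of_card q0P pP aI q0a pa (q0_min p pP').
by have := sub b; rewrite !mem_trace bI q0b => /(_ isT) /andP [].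
Qed.

End Traces.

Section Neighbourhoods.
Variables (m : nat) (d : nat -> T).

Lemma subset_Xupto k n : k <= n -> Xupto e m d k \subset Xupto e m d n.
Proof.
move/subnK <-; elim: (n - k) => //= l IH.
exact: subset_trans IH (subsetUl _ _).
Qed.

Lemma Xset_adj i x : x \in Xset e m d i -> e (d i) x.
Proof. by rewrite !inE => /andP []. Qed.

Lemma Xset_nadj i j x : i < j -> x \in Xset e m d j -> ~~ e (d i) x.
Proof.
move=> lt_ij; rewrite !inE negb_or => /andP [/andP [x_old x_nD] _].
apply: contra x_old => dix; apply: (subsetP (subset_Xupto lt_ij)).
by rewrite /= !inE negb_or x_nD dix !andbT orbN.
Qed.

End Neighbourhoods.
End Graph.

Theorem claim3p2 (T : finType) (e : rel T)
  (e_sym : symmetric e) (e_irr : irreflexive e)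
  (hP5 : P5_free e)
  (m : nat) (d : nat -> T)
  (d_inj : {in [pred k | k < m] &, injective d})
  (i j : nat) (hij : i < j) (hjm : j < m)
  (I : {set T}) (hIX : I \subset Xset e m d i) (hIind : independent e I) :
  exists2 I' : {set T}, (I' \subset I) && (#|I'| <= 2) &
    forall p, p \in nbhdS e I :&: Xset e m d j ->
      exists2 a, a \in I' & e p a.
Proof.
apply: (dominating_pair e_sym e_irr hP5 (z := d i)) => //.
- by move=> a /(subsetP hIX) /Xset_adj.
- by move=> q /setIP [_] /(Xset_nadj hij).
- exact: subsetIl.
Qed.
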